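(* For $d\ge3$, the maximal number of pairwise disjoint lines in $\mathcal{L}^0\cup\mathcal{L}^s$ is $2d$ for $s=1,2$, and the maximal number of pairwise disjoint lines in $\mathcal{L}^1\cup\mathcal{L}^2$ is $2d$. Consequently the maximal number $\mathfrak{s}({\rm F}_d)$ of pairwise disjoint lines on ${\rm F}_d$ satisfies $2d\le\mathfrak{s}({\rm F}_d)\le 3d$.
   Context: ${\rm F}_d\subset\mathbb{P}^3(\mathbb{C})$ is the surface $x^d-y^d-z^d+w^d=0$. Fix a primitive $d$-th root of unity $\eta$ and $v\in\mathbb{C}$ with $v^d=-1$. For $k,i\in\{0,\dots,d-1\}$ define $L^0_{k,i}:\{y=\eta^i x,\ w=\eta^k z\}$, $L^1_{k,i}:\{x=\eta^{k+i}z,\ y=\eta^i w\}$, $L^2_{k,i}:\{x=v\eta^i w,\ y=v\eta^{k+i}z\}$, and $\mathcal{L}^s=\{L^s_{k,i}\}_{k,i}$; these are all the lines on ${\rm F}_d$. *)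

(* The ground field C is taken as R[i] = complex R for
   R : realType (MathComp-Analysis reals, which are real closed), i.e. C. *)
From mathcomp Require Import all_boot all_order all_algebra.
From mathcomp Require Import complex.
From mathcomp Require Import reals.
Set Implicit Arguments. Unset Strict Implicit. Unset Printing Implicit Defensive.
Import Order.TTheory GRing.Theory Num.Theory.
Local Open Scope ring_scope.

(* Index of a line L^s_{k,i}: (s, k, i) with s in {0,1,2}, k,i in {0..d-1}. *)
Definition line_idx (d : nat) := ('I_3 * 'I_d * 'I_d)%type.

(* The homogeneous point [x:y:z:w] lies on the line L^s_{k,i}
   (eta a primitive d-th root of unity, v with v^d = -1). *)
Definition on_line (C : ringType) (eta v : C) (s k i : nat) (x y z w : C) : Prop :=
  match s with
  | 0 => y = eta ^+ i * x /\ w = eta ^+ k * z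
  | 1 => x = eta ^+ (k + i) * z /\ y = eta ^+ i * w
  | _ => x = v * eta ^+ i * w /\ y = v * eta ^+ (k + i) * z
  end.

Definition on_line_idx (C : ringType) (eta v : C) d (a : line_idx d) x y z w :=
  on_line eta v (val a.1.1) (val a.1.2) (val a.2) x y z w.

Definition lines_meet (C : ringType) (eta v : C) d (a b : line_idx d) : Prop :=
  exists x y z w : C, ~ (x = 0 /\ y = 0 /\ z = 0 /\ w = 0) /\
    on_line_idx eta v a x y z w /\ on_line_idx eta v b x y z w.

Definition pairwise_disjoint (C : ringType) (eta v : C) d (S : {set line_idx d}) : Prop :=
  forall a b, a \in S -> b \in S -> a <> b -> ~ lines_meet eta v a b.

Definition in_families d (fs : seq nat) (S : {set line_idx d}) : Prop :=
  forall a, a \in S -> val a.1.1 \in fs.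

Definition max_disjoint_is (C : ringType) (eta v : C) d (fs : seq nat) (n : nat) : Prop :=
  (exists S : {set line_idx d}, [/\ in_families fs S, pairwise_disjoint eta v S & #|S| = n]) /\
  (forall S : {set line_idx d}, in_families fs S -> pairwise_disjoint eta v S -> #|S| <= n)%N.

(* For fixed s and i all lines L^s_{k,i} pass through a common point, so a
   disjoint family contains at most one line per pair (s, i), i.e. at most d
   lines from each L^s.  Conversely, intersecting the defining equations shows
   that two lines meet only under explicit congruences modulo d between their
   indices (involving m with v^2 = eta^m for the pair L^1, L^2); taking k to be
   a suitable function of i gives d lines in each of two families that satisfy
   none of them. *)

From mathcomp Require Import all_boot all_order all_algebra.
From mathcomp Require Import complex reals.
From mathcomp Require Import ring zify.
Import Order.TTheory GRing.Theory Num.Theory.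
Local Open Scope ring_scope.
Set Implicit Arguments. Unset Strict Implicit.

Lemma eq_mod_ord d (i j : 'I_d) : (i == j %[mod d])%N = (i == j).
Proof. by rewrite !modn_small. Qed.

Lemma rev_ord_addn n (i : 'I_n.+1) : (rev_ord i + i)%N = n.
Proof. by rewrite /= subSS subnK // -ltnS. Qed.

Lemma card_ord_in_seq_le n (s : seq nat) : (#|[set j : 'I_n | val j \in s]| <= size s)%N.
Proof.
rewrite cardE -(size_map val); apply: uniq_leq_size.
  by rewrite map_inj_uniq ?enum_uniq //; apply: val_inj.
by move=> x /mapP[j]; rewrite mem_enum inE => j_s ->.
Qed.

Section LineFamilies.
Variables (C : nzRingType) (e v : C) (d : nat).

Lemma lines_meet_sym (a b : line_idx d) : lines_meet e v a b -> lines_meet e v b a.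
Proof. by case=> x [y [z [w [P0 [on_a on_b]]]]]; exists x, y, z, w. Qed.

Lemma lines_meet_same_family_index (a b : line_idx d) :
  a.1.1 = b.1.1 -> a.2 = b.2 -> lines_meet e v a b.
Proof.
case: a b => [[s k] i] [[s' k'] i'] /= <- <-.
rewrite /lines_meet /on_line_idx /=.
case: s => [[|[|[|s]]] hs] //=.
- by exists 1, (e ^+ i), 0, 0; rewrite !mulr1 !mulr0; split=> // -[/eqP]; rewrite oner_eq0.
- by exists 0, (e ^+ i), 0, 1; rewrite !mulr1 !mulr0; split=> // -[_ [_ [_ /eqP]]]; rewrite oner_eq0.
- by exists (v * e ^+ i), 0, 0, 1; rewrite !mulr1 !mulr0; split=> // -[_ [_ [_ /eqP]]]; rewrite oner_eq0.
Qed.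

Lemma in_families_all (S : {set line_idx d}) : in_families [:: 0%N; 1%N; 2%N] S.
Proof. by move=> a _; rewrite -[[:: _; _; _]]/(iota 0 3) mem_iota ltn_ord. Qed.

Lemma card_pairwise_disjoint_le fs (S : {set line_idx d}) :
  in_families fs S -> pairwise_disjoint e v S -> (#|S| <= size fs * d)%N.
Proof.
move=> S_fs S_disj.
have inj : {in S &, injective (fun a : line_idx d => (a.1.1, a.2))}.
  move=> a b aS bS [s_ab i_ab]; have [// | /eqP a_neq_b] := eqVneq a b.
  by case: (S_disj a b aS bS a_neq_b); apply: lines_meet_same_family_index.
have sub : [set (a.1.1, a.2) | a in S] \subset setX [set s : 'I_3 | val s \in fs] [set: 'I_d].
  by apply/subsetP => _ /imsetP[a aS ->]; rewrite in_setX !inE S_fs.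
rewrite -(card_in_imset inj) (leq_trans (subset_leq_card sub)) //.
by rewrite cardsX cardsT card_ord leq_mul2r card_ord_in_seq_le orbT.
Qed.

Definition two_families (s1 s2 : 'I_3) (k1 k2 : 'I_d -> 'I_d) : {set line_idx d} :=
  [set (s1, k1 i, i) | i : 'I_d] :|: [set (s2, k2 i, i) | i : 'I_d].

Variables (s1 s2 : 'I_3) (k1 k2 : 'I_d -> 'I_d).
Hypothesis s1_neq_s2 : s1 != s2.

Lemma card_two_families : #|two_families s1 s2 k1 k2| = (2 * d)%N.
Proof.
have disj : [set (s1, k1 i, i) | i : 'I_d] :&: [set (s2, k2 i, i) | i : 'I_d] = set0.
  apply/setP => a; rewrite !inE; apply/negbTE/andP.
  by case=> /imsetP[i _ ->] /imsetP[j _ [s12 _ _]]; move: s1_neq_s2; rewrite s12 eqxx.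
rewrite cardsU disj cards0 subn0 !card_imset ?card_ord ?addnn ?mul2n //.
all: by move=> i j [].
Qed.

Hypotheses
  (disj1 : forall i j, i != j -> ~ lines_meet e v (s1, k1 i, i) (s1, k1 j, j))
  (disj2 : forall i j, i != j -> ~ lines_meet e v (s2, k2 i, i) (s2, k2 j, j))
  (disj12 : forall i j, ~ lines_meet e v (s1, k1 i, i) (s2, k2 j, j)).

Lemma two_families_pairwise_disjoint : pairwise_disjoint e v (two_families s1 s2 k1 k2).
Proof.
move=> a b /setUP[]/imsetP[i _ ->] /setUP[]/imsetP[j _ ->] a_neq_b.
- by apply: disj1; apply: contraPneq a_neq_b => ->.
- exact: disj12.
- by move/lines_meet_sym; apply: disj12.
- by apply: disj2; apply: contraPneq a_neq_b => ->.
Qed.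

Lemma max_disjoint_two_families : max_disjoint_is e v d [:: val s1; val s2] (2 * d).
Proof.
split; last by move=> S S_fs S_disj; apply: card_pairwise_disjoint_le S_fs S_disj.
exists (two_families s1 s2 k1 k2); split.
- by move=> _ /setUP[]/imsetP[i _ ->]; rewrite !inE eqxx ?orbT.
- exact: two_families_pairwise_disjoint.
- exact: card_two_families.
Qed.

End LineFamilies.

Section MeetConditions.
Variables (F : fieldType) (e v : F) (d m : nat).
Hypotheses (pe : d.-primitive_root e) (v_sq : v ^+ 2 = e ^+ m).

Lemma prim_root_neq0 : e != 0.
Proof.
apply/eqP => e0; have := prim_expr_order pe.
by rewrite e0 expr0n gtn_eqF ?(prim_order_gt0 pe) // => /eqP; rewrite eq_sym oner_eq0.
Qed.

Lemma v_neq0 : v != 0.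
Proof.
have : v ^+ 2 != 0 by rewrite v_sq expf_neq0 // prim_root_neq0.
by rewrite expf_eq0.
Qed.

Lemma expr_mulIf_mod (t : F) a b : t != 0 -> e ^+ a * t = e ^+ b * t -> (a == b %[mod d])%N.
Proof. by move=> t0 /(mulIf t0) /eqP; rewrite (eq_prim_root_expr pe). Qed.

Variables k i k' i' : 'I_d.

Lemma lines_meet_00 : lines_meet e v (0, k, i) (0, k', i') -> (k == k') || (i == i').
Proof.
rewrite /lines_meet /on_line_idx /= => -[x [y [z [w [P0 [[y1 w1] [y2 w2]]]]]]].
have [x0 | x0] := eqVneq x 0; last first.
  by apply/orP; right; rewrite -eq_mod_ord (expr_mulIf_mod x0) // -y1 -y2.
have z0 : z != 0 by apply/eqP => z0; apply: P0; rewrite w1 y1 x0 z0 !mulr0.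
by rewrite -eq_mod_ord (expr_mulIf_mod z0) // -w1 -w2.
Qed.

Lemma lines_meet_11 :
  lines_meet e v (1, k, i) (1, k', i') -> (k + i == k' + i' %[mod d])%N || (i == i').
Proof.
rewrite /lines_meet /on_line_idx /= => -[x [y [z [w [P0 [[x1 y1] [x2 y2]]]]]]].
have [z0 | z0] := eqVneq z 0; last by rewrite (expr_mulIf_mod z0) // -x1 -x2.
have w0 : w != 0 by apply/eqP => w0; apply: P0; rewrite x1 y1 z0 w0 !mulr0.
by apply/orP; right; rewrite -eq_mod_ord (expr_mulIf_mod w0) // -y1 -y2.
Qed.

Lemma lines_meet_22 :
  lines_meet e v (2, k, i) (2, k', i') -> (k + i == k' + i' %[mod d])%N || (i == i').
Proof.
rewrite /lines_meet /on_line_idx /= => -[x [y [z [w [P0 [[x1 y1] [x2 y2]]]]]]].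
have [w0 | w0] := eqVneq w 0; last first.
  apply/orP; right; rewrite -eq_mod_ord (expr_mulIf_mod w0) //.
  by apply: (mulfI v_neq0); rewrite !mulrA -x1 -x2.
have z0 : z != 0 by apply/eqP => z0; apply: P0; rewrite x1 y1 z0 w0 !mulr0.
by rewrite (expr_mulIf_mod z0) //; apply: (mulfI v_neq0); rewrite !mulrA -y1 -y2.
Qed.

Lemma lines_meet_01 : lines_meet e v (0, k, i) (1, k', i') -> (i + k' == k %[mod d])%N.
Proof.
rewrite /lines_meet /on_line_idx /= => -[x [y [z [w [P0 [[y1 w1] [x2 y2]]]]]]].
have z0 : z != 0 by apply/eqP => z0; apply: P0; rewrite y1 x2 w1 z0 !mulr0.
rewrite -(eqn_modDr i') -addnA (expr_mulIf_mod z0) //.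
by rewrite exprD -mulrA -x2 -y1 y2 w1 mulrA -exprD addnC.
Qed.

Lemma lines_meet_02 : lines_meet e v (0, k, i) (2, k', i') -> (i + k == k' %[mod d])%N.
Proof.
rewrite /lines_meet /on_line_idx /= => -[x [y [z [w [P0 [[y1 w1] [x2 y2]]]]]]].
have z0 : z != 0 by apply/eqP => z0; apply: P0; rewrite y1 x2 w1 z0 !mulr0.
rewrite -(eqn_modDr i') (expr_mulIf_mod z0) //; apply: (mulfI v_neq0).
by rewrite [RHS]mulrA -y2 y1 x2 w1 !exprD; ring.
Qed.

Lemma lines_meet_12 :
  lines_meet e v (1, k, i) (2, k', i') -> (k + i * 2 == k' + i' * 2 + m %[mod d])%N.
Proof.
rewrite /lines_meet /on_line_idx /= => -[x [y [z [w [P0 [[x1 y1] [x2 y2]]]]]]].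
have z0 : z != 0.
  apply/eqP => z0; have x0 : x = 0 by rewrite x1 z0 mulr0.
  have w0 : w = 0.
    apply: (mulfI (mulf_neq0 v_neq0 (expf_neq0 i' prim_root_neq0))).
    by rewrite -x2 x0 mulr0.
  by apply: P0; rewrite y1 x0 z0 w0 mulr0.
rewrite (expr_mulIf_mod z0) //.
transitivity (e ^+ i * x); first by rewrite x1 !exprD exprM; ring.
transitivity (v * e ^+ i' * y); first by rewrite x2 y1; ring.
by rewrite y2 !exprD exprM -v_sq; ring.
Qed.

End MeetConditions.

Section Witnesses.
Variables (F : fieldType) (e v : F) (n m : nat).
Local Notation d := n.+1.
Hypotheses (pe : d.-primitive_root e) (v_sq : v ^+ 2 = e ^+ m) (d_gt1 : (1 < d)%N).

Lemma max_disjoint_01 : max_disjoint_is e v d [:: 0%N; 1%N] (2 * d).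
Proof.
apply: (max_disjoint_two_families (s1 := 0) (s2 := 1) (k1 := id) (k2 := fun=> Ordinal d_gt1)) => //=.
- by move=> i j ij /(lines_meet_00 pe); rewrite orbb (negPf ij).
- by move=> i j ij /(lines_meet_11 pe); rewrite eqn_modDl eq_mod_ord orbb (negPf ij).
- move=> i j /(lines_meet_01 pe) /=.
  by rewrite -{2}[val i]addn0 eqn_modDl mod0n modn_small.
Qed.

Lemma max_disjoint_02 : max_disjoint_is e v d [:: 0%N; 2%N] (2 * d).
Proof.
apply: (max_disjoint_two_families (s1 := 0) (s2 := 2) (k1 := @rev_ord d) (k2 := fun=> ord0)) => //=.
- by move=> i j ij /(lines_meet_00 pe); rewrite (inj_eq rev_ord_inj) orbb (negPf ij).
- by move=> i j ij /(lines_meet_22 pe v_sq); rewrite !add0n eq_mod_ord orbb (negPf ij).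
- move=> i j /(lines_meet_02 pe v_sq); rewrite addnC rev_ord_addn mod0n modn_small //.
  by rewrite eqn0Ngt -ltnS d_gt1.
Qed.

(* Along i, k + 2i stays constant modulo d while k + i runs through all residues. *)
Definition k_twisted (c : nat) (i : 'I_d) : 'I_d := inZp (rev_ord i * 2 + c).

Lemma k_twisted_addn c i : (k_twisted c i + i = rev_ord i + (n + c) %[mod d])%N.
Proof. by rewrite /= modnDml; congr (_ %% _)%N; have := ltn_ord i; lia. Qed.

Lemma k_twisted_addn_mul2 c i : (k_twisted c i + i * 2 = n * 2 + c %[mod d])%N.
Proof. by rewrite /= modnDml; congr (_ %% _)%N; have := ltn_ord i; lia. Qed.

Lemma max_disjoint_12 : max_disjoint_is e v d [:: 1%N; 2%N] (2 * d).
Proof.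
apply: (max_disjoint_two_families (s1 := 1) (s2 := 2)
          (k1 := k_twisted 0) (k2 := k_twisted (1 + n * m))) => //=.
- move=> i j ij /(lines_meet_11 pe).
  by rewrite !k_twisted_addn eqn_modDr eq_mod_ord (inj_eq rev_ord_inj) orbb (negPf ij).
- move=> i j ij /(lines_meet_22 pe v_sq).
  by rewrite !k_twisted_addn eqn_modDr eq_mod_ord (inj_eq rev_ord_inj) orbb (negPf ij).
- move=> i j /(lines_meet_12 pe v_sq).
  (* The shift c = 1 + n m gives m + c = 1 + m d, which is never 0 modulo d. *)
  have -> : (k_twisted (1 + n * m) j + j * 2 + m = n * 2 + 1 %[mod d])%N.
    rewrite -modnDml k_twisted_addn_mul2 modnDml.
    by rewrite (_ : n * 2 + (1 + n * m) + m = m * d + (n * 2 + 1))%N ?modnMDl //; lia.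
  by rewrite k_twisted_addn_mul2 eqn_modDl mod0n modn_small.
Qed.

End Witnesses.

Theorem corollary2p3 (R : realType) (d : nat) (eta v : R[i]) :
  (3 <= d)%N -> d.-primitive_root eta -> v ^+ d = -1 ->
  [/\ max_disjoint_is eta v d [:: 0%N; 1%N] (2 * d),
      max_disjoint_is eta v d [:: 0%N; 2%N] (2 * d),
      max_disjoint_is eta v d [:: 1%N; 2%N] (2 * d),
      (exists S : {set line_idx d}, pairwise_disjoint eta v S /\ (2 * d <= #|S|)%N)
    & (forall S : {set line_idx d}, pairwise_disjoint eta v S -> (#|S| <= 3 * d)%N)].
Proof.
move=> d_ge3 pe v_d.
have [m v_sq] : exists m : nat, v ^+ 2 = eta ^+ m.
  have /(prim_rootP pe)[m ->] : (v ^+ 2) ^+ d = 1.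
    by rewrite -exprM mulnC exprM v_d sqrrN expr1n.
  by exists m.
have d_gt1 : (1 < d)%N := ltnW d_ge3.
case: d d_gt1 pe {d_ge3 v_d} => // n d_gt1 pe.
have max01 := max_disjoint_01 v pe d_gt1.
split.
- exact: max01.
- exact: max_disjoint_02 pe v_sq d_gt1.
- exact: max_disjoint_12 pe v_sq d_gt1.
- by have [[S [_ S_disj S_card]] _] := max01; exists S; rewrite S_card.
- by move=> S; apply: card_pairwise_disjoint_le (in_families_all (S := S)).
Qed.
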